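(* Let $\alpha, \beta_1, \beta_2 > 0$ and let $U_1, U_2, V_1, V_2$ be random variables with $U_1, U_2$ independent and $V_1, V_2$ independent. If $V_i \preceq_{(\alpha, \beta_i)} U_i$ for $i \in \{1,2\}$, then \[ \ln\!\big(e^{V_1} + e^{V_2}\big) \preceq_{(\alpha,\, \beta_1+\beta_2)} \ln\!\big(e^{U_1} + e^{U_2}\big). \]
   Context: For a random variable $X$ (possibly taking values $\pm\infty$) let $\bar{F}_X(x) = 1 - F_X(x)$ be its complementary CDF. Given $\alpha \ge 0$, $\beta \in [0,1]$, we write $V \preceq_{(\alpha,\beta)} U$ if $\bar{F}_V(x) \le \bar{F}_U(x-\alpha) + \beta$ for all $x \in [-\infty,\infty]$. *)

From HB Require Import structures.
From mathcomp Require Import all_boot all_order all_algebra.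
From mathcomp Require Import all_classical all_reals all_analysis.
From mathcomp Require Import measurable_realfun.
Set Implicit Arguments. Unset Strict Implicit. Unset Printing Implicit Defensive.
Import Order.TTheory GRing.Theory Num.Theory.
Local Open Scope classical_set_scope.
Local Open Scope ring_scope.
Local Open Scope ereal_scope.

Definition ccdf d (T : measurableType d) (R : realType)
  (P : probability T R) (X : T -> \bar R) (x : \bar R) : \bar R :=
  1 - P [set w | X w <= x].

(* V <=_(alpha,beta) U : ccdf_V(x) <= ccdf_U(x - alpha) + beta for all
   x in [-oo, +oo].  V and U may live on different probability spaces. *)
Definition ccdf_dom d1 d2 (T1 : measurableType d1) (T2 : measurableType d2)
  (R : realType) (P1 : probability T1 R) (P2 : probability T2 R)
  (alpha beta : R) (V : T1 -> \bar R) (U : T2 -> \bar R) : Prop :=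
  forall x : \bar R, ccdf P1 V x <= ccdf P2 U (x - alpha%:E) + beta%:E.

Definition indep2 d (T : measurableType d) (R : realType)
  (P : probability T R) (X Y : T -> \bar R) : Prop :=
  forall A B : set (\bar R), measurable A -> measurable B ->
    P (X @^-1` A `&` Y @^-1` B) = P (X @^-1` A) * P (Y @^-1` B).

(* ln(e^a + e^b) on extended reals, with e^{-oo} = 0, e^{+oo} = +oo,
   ln 0 = -oo, ln(+oo) = +oo. *)
Definition lse (R : realType) (a b : \bar R) : \bar R :=
  match a, b with
  | +oo, _ | _, +oo => +oo
  | -oo, y => y
  | x, -oo => x
  | (r%:E), (s%:E) => (ln (expR r + expR s))%:E
  end.

From Pilot Require Import Defs.
From HB Require Import structures.
From mathcomp Require Import all_boot all_order all_algebra.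
From mathcomp Require Import all_classical all_reals all_analysis.
From mathcomp Require Import measurable_realfun.
Import Order.TTheory GRing.Theory Num.Theory.
Local Open Scope classical_set_scope.
Local Open Scope ring_scope.

(* Since ccdf X x = P(x < X), the hypothesis V <=_(alpha,beta) U
   says that every open ray ]t, +oo] has law(V)-mass at most its
   law(U + alpha)-mass plus beta.  Moreover x < ln(e^a + e^b) iff (a, b) lies
   in S_c := {(a, b) | c < e^a + e^b} with c = e^x, and adding alpha to both
   coordinates adds alpha to ln(e^a + e^b).  By independence the law of
   (V1, V2) is law(V1) x law(V2), and every section of S_c is an open ray or
   the whole line.  Integrating the section inequalities (Fubini) replaces
   law(V2) by law(U2 + alpha) at cost beta2, then law(V1) by law(U1 + alpha)
   at cost beta1. *)

(* Packing the measurable function as an [{mfun}] makes its law a probability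
   measure. *)
Local Notation law P mX := (distribution P (mfun_Sub (mem_set mX))).

Section lse.
Context {R : realType}.
Local Open Scope ereal_scope.

Lemma lse_gt (x a b : \bar R) : (x < lse a b) = (expeR x < expeR a + expeR b).
Proof.
case: x => [x| |]; case: a => [a| |]; case: b => [b| |] //=;
  rewrite ?lte_fin ?addr0 ?add0r ?expR_gt0 ?ltry ?ltNyr //=.
- rewrite -[in RHS](@lnK _ (expR a + expR b)%R) ?ltr_expR //.
  by rewrite posrE addr_gt0 ?expR_gt0.
- by rewrite ltr_expR.
- by rewrite ltr_expR.
- by rewrite [X in _ = X]ltNge expR_ge0 /=; apply/negbTE; rewrite -leNgt leNye.
- by rewrite addr_gt0 ?expR_gt0.
Qed.

Lemma lseDr (a b : \bar R) (r : R) : lse (a + r%:E) (b + r%:E) = lse a b + r%:E.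
Proof.
case: a => [a| |]; case: b => [b| |] //=.
congr EFin; rewrite !expRD -mulrDl lnM; first by rewrite expRK.
all: by rewrite posrE ?addr_gt0 ?expR_gt0.
Qed.

End lse.

Section expeR_sum_gt.
Context {R : realType}.
Local Open Scope ereal_scope.

Lemma measurable_expeR : measurable_fun [set: \bar R] (@expeR R).
Proof.
rewrite (_ : expeR = fun x => if x == -oo then 0 else er_map expR x); last first.
  by apply: funext => -[].
apply: measurable_fun_ifT => //.
- apply: (measurable_fun_bool true).
  rewrite setTI (_ : _ @^-1` _ = [set -oo]); first exact: emeasurable_set1.
  by apply/seteqP; split => y /=; [move/eqP|move=> ->].
- by apply: (@measurable_er_map _ R); exact: measurable_expR.
Qed.

Definition expeR_sum_gt (c : \bar R) : set (\bar R * \bar R) :=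
  [set p | c < expeR p.1 + expeR p.2].

Lemma measurable_expeR_sum_gt c : measurable (expeR_sum_gt c).
Proof.
have mE : measurable_fun [set: \bar R * \bar R]
    (fun p : \bar R * \bar R => expeR p.1 + expeR p.2).
  by apply: emeasurable_funD; apply: measurableT_comp measurable_expeR _;
    [exact: measurable_fst|exact: measurable_snd].
by rewrite -[expeR_sum_gt c]setTI; exact: emeasurable_fun_o_infty.
Qed.

Lemma lse_gt_preimage d (T : measurableType d) (X Y : T -> \bar R) x :
  [set w | x < lse (X w) (Y w)] =
  (fun w => (X w, Y w)) @^-1` expeR_sum_gt (expeR x).
Proof. by apply/seteqP; split => w /=; rewrite lse_gt. Qed.

Definition upper_ray (A : set (\bar R)) :=
  A = setT \/ exists t, A = [set b | t < b].

Lemma upper_ray_addexpeR_gt (c e : \bar R) : 0 <= e ->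
  upper_ray [set b | c < e + expeR b].
Proof.
move=> e0; have [ce|ec] := ltP c e.
  left; apply/seteqP; split => b //= _.
  exact: lt_le_trans ce (leeDl _ (expeR_ge0 b)).
right; case: c ec => [r| |] ec; last first.
- by move: ec; rewrite leeNy_eq => /eqP ec; rewrite ec leeNy_eq in e0.
- by exists +oo; apply/seteqP; split => b /=; rewrite ltNge leey.
case: e e0 ec => [s| |] //= e0; rewrite lee_fin => sr.
(* For reals s <= r, r < s + e^b iff ln (r - s) < b, except that for r = s
   the threshold is -oo rather than ln 0 = 0. *)
have [rs|rs] := eqVneq (r - s)%R 0%R.
  exists -oo; apply/seteqP; split => -[b| |] //=; rewrite ?lte_fin.
  + by rewrite ltNyr.
  + by rewrite addr0 ltNge -lee_fin lee_fin sr.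
  + by move=> _; rewrite -ltrBlDl rs expR_gt0.
  + by move=> _; rewrite addey // ltry.
have r_s : (0 < r - s)%R by rewrite lt_neqAle eq_sym rs subr_ge0.
exists (ln (r - s))%:E; apply/seteqP; split => -[b| |] //=; rewrite ?lte_fin.
+ by rewrite -ltrBlDl => h; rewrite -ltr_expR lnK.
+ by move=> _; rewrite ltry.
+ by rewrite addr0 ltNge -lee_fin lee_fin sr.
+ by rewrite -ltrBlDl -ltr_expR lnK.
+ by move=> _; rewrite addey // ltry.
Qed.

Lemma upper_ray_xsection_expeR_sum_gt c a :
  upper_ray (xsection (expeR_sum_gt c) a).
Proof.
rewrite (_ : xsection _ a = [set b | c < expeR a + expeR b]).
  exact/upper_ray_addexpeR_gt/expeR_ge0.
by apply/seteqP; split => b; rewrite /xsection /= inE.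
Qed.

Lemma upper_ray_ysection_expeR_sum_gt c b :
  upper_ray (ysection (expeR_sum_gt c) b).
Proof.
rewrite (_ : ysection _ b = [set a | c < expeR b + expeR a]).
  exact/upper_ray_addexpeR_gt/expeR_ge0.
by apply/seteqP; split => a; rewrite /ysection /= inE addeC.
Qed.

End expeR_sum_gt.

Section tail_dom.
Context {R : realType}.
Local Open Scope ereal_scope.
Implicit Types mu nu : probability (\bar R) R.

Definition tail_dom mu nu (be : R) :=
  forall t, mu [set b | t < b] <= nu [set b | t < b] + be%:E.

Lemma tail_dom_upper_ray mu nu be A : (0 <= be)%R ->
  tail_dom mu nu be -> upper_ray A -> mu A <= nu A + be%:E.
Proof.
move=> be0 dom [->|[t ->]]; last exact: dom.
by rewrite !probability_setT leeDl // lee_fin.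
Qed.

Lemma le_integralDr_cst (m : probability (\bar R) R) (f g : \bar R -> \bar R)
    (be : R) : (0 <= be)%R -> (forall x, 0 <= f x) -> (forall x, 0 <= g x) ->
    measurable_fun setT f -> measurable_fun setT g ->
    (forall x, f x <= g x + be%:E) ->
  \int[m]_x f x <= \int[m]_x g x + be%:E.
Proof.
move=> be0 f0 g0 mf mg fg.
apply: le_trans (_ : \int[m]_x (g x + be%:E) <= _).
  by apply: ge0_le_integral => //; exact: emeasurable_funD.
rewrite ge0_integralD // integral_cst // [_ * m _](_ : _ = be%:E) //.
by rewrite -[RHS]mule1; congr (_ * _); exact: probability_setT.
Qed.

Lemma product_measure12E d1 d2 (T1 : measurableType d1)
    (T2 : measurableType d2) (m1 : {sigma_finite_measure set T1 -> \bar R})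
    (m2 : {sigma_finite_measure set T2 -> \bar R}) S :
  measurable S -> (m1 \x m2) S = (m1 \x^ m2) S.
Proof.
by apply: product_measure_unique => A B mA mB /=; rewrite product_measure2E.
Qed.

Lemma product_tail_dom mu1 mu2 nu1 nu2 b1 b2 S :
  (0 <= b1)%R -> (0 <= b2)%R -> tail_dom mu1 nu1 b1 -> tail_dom mu2 nu2 b2 ->
  measurable S -> (forall a, upper_ray (xsection S a)) ->
  (forall b, upper_ray (ysection S b)) ->
  (mu1 \x mu2) S <= (nu1 \x nu2) S + (b1 + b2)%:E.
Proof.
move=> b10 b20 dom1 dom2 mS xS yS.
have swap2 : (mu1 \x mu2) S <= (mu1 \x nu2) S + b2%:E.
  apply: le_integralDr_cst => // [||a]; try exact: measurable_fun_xsection.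
  exact: tail_dom_upper_ray.
have swap1 : (mu1 \x nu2) S <= (nu1 \x nu2) S + b1%:E.
  rewrite !product_measure12E //.
  apply: le_integralDr_cst => // [||b]; try exact: measurable_fun_ysection.
  exact: tail_dom_upper_ray.
by apply: le_trans swap2 _; rewrite EFinD addeA; apply: leeD.
Qed.

End tail_dom.

Section random_variables.
Context {R : realType} {d} {T : measurableType d} {P : probability T R}.
Local Open Scope ereal_scope.
Implicit Types X Y : T -> \bar R.

Lemma ccdfE X x : measurable [set w | x < X w] ->
  Defs.ccdf P X x = P [set w | x < X w].
Proof.
move=> mgt; rewrite /Defs.ccdf (_ : [set w | X w <= x] = ~` [set w | x < X w]).
  by rewrite probability_setC // oppeB ?addeA ?subee ?add0e.
by apply/seteqP; split => w /=; rewrite leNgt => /negP.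
Qed.

Lemma measurable_fun_gt X x : measurable_fun setT X ->
  measurable [set w | x < X w].
Proof.
by move=> mX; rewrite -[X in measurable X]setTI; exact: emeasurable_fun_o_infty.
Qed.

Lemma measurable_lse_gt X Y x : measurable_fun setT X -> measurable_fun setT Y ->
  measurable [set w | x < lse (X w) (Y w)].
Proof.
move=> mX mY; rewrite lse_gt_preimage -[X in measurable X]setTI.
exact: (measurable_fun_pair mX mY) (measurable_expeR_sum_gt _).
Qed.

Lemma indep2_comp {X Y} {f g : \bar R -> \bar R} : indep2 P X Y ->
  measurable_fun setT f -> measurable_fun setT g ->
  indep2 P (f \o X) (g \o Y).
Proof.
move=> iXY mf mg A B mA mB.
have mfA : measurable (f @^-1` A) by rewrite -(setTI (f @^-1` A)); exact: mf.
have mgB : measurable (g @^-1` B) by rewrite -(setTI (g @^-1` B)); exact: mg.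
exact: iXY mfA mgB.
Qed.

Lemma indep2_law_pair {X Y} (mX : measurable_fun setT X)
    (mY : measurable_fun setT Y) : indep2 P X Y -> forall S, measurable S ->
  P ((fun w => (X w, Y w)) @^-1` S) = (law P mX \x law P mY) S.
Proof.
move=> iXY S mS; have mXY := measurable_fun_pair mX mY.
by symmetry; apply: (product_measure_unique (m' := law P mXY)).
Qed.

End random_variables.

Section ccdf_dom.
Context {R : realType} {d1 d2} {T1 : measurableType d1} {T2 : measurableType d2}
  {P1 : probability T1 R} {P2 : probability T2 R}.
Local Open Scope ereal_scope.

Lemma ccdf_dom_tail_dom {alpha be : R} {V : T1 -> \bar R} {U : T2 -> \bar R}
    (mV : measurable_fun setT V)
    (mUa : measurable_fun setT (fun w => U w + alpha%:E)) :
    measurable_fun setT U -> ccdf_dom P1 P2 alpha be V U ->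
  tail_dom (law P1 mV) (law P2 mUa) be.
Proof.
move=> mU dom t; have := dom t; rewrite !ccdfE; try exact: measurable_fun_gt.
rewrite (_ : [set w | t - alpha%:E < U w] =
             (fun w => U w + alpha%:E) @^-1` [set b | t < b]) //.
by apply/seteqP; split => w /=; rewrite EFinN lteBlDr.
Qed.

End ccdf_dom.

Theorem mainTheorem4 (R : realType)
  (dU : measure_display) (TU : measurableType dU) (PU : probability TU R)
  (dV : measure_display) (TV : measurableType dV) (PV : probability TV R)
  (U1 U2 : TU -> \bar R) (V1 V2 : TV -> \bar R)
  (alpha beta1 beta2 : R)
  (halpha : 0 < alpha) (hbeta1 : 0 < beta1) (hbeta2 : 0 < beta2)
  (mU1 : measurable_fun setT U1) (mU2 : measurable_fun setT U2)
  (mV1 : measurable_fun setT V1) (mV2 : measurable_fun setT V2)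
  (iU : indep2 PU U1 U2) (iV : indep2 PV V1 V2)
  (h1 : ccdf_dom PV PU alpha beta1 V1 U1)
  (h2 : ccdf_dom PV PU alpha beta2 V2 U2) :
  ccdf_dom PV PU alpha (beta1 + beta2)
    (fun w => lse (V1 w) (V2 w)) (fun w => lse (U1 w) (U2 w)).
Proof.
move=> x.
pose shift (y : \bar R) := (y + alpha%:E)%E.
have mshift : measurable_fun setT shift by exact/emeasurable_funD.
have mU1a := measurableT_comp mshift mU1.
have mU2a := measurableT_comp mshift mU2.
rewrite !ccdfE; try exact: measurable_lse_gt.
rewrite (_ : [set w | _ < lse (U1 w) (U2 w)]%E =
             [set w | x < lse (shift (U1 w)) (shift (U2 w))]%E); last first.
  by apply/seteqP; split => w /=; rewrite lseDr EFinN lteBlDr.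
have iUa := indep2_comp iU mshift mshift.
rewrite !lse_gt_preimage.
rewrite (indep2_law_pair mV1 mV2 iV _ (measurable_expeR_sum_gt _)).
rewrite (indep2_law_pair mU1a mU2a iUa _ (measurable_expeR_sum_gt _)).
apply: product_tail_dom (ltW hbeta1) (ltW hbeta2) _ _
  (measurable_expeR_sum_gt _) (upper_ray_xsection_expeR_sum_gt _)
  (upper_ray_ysection_expeR_sum_gt _).
- exact: ccdf_dom_tail_dom mU1 h1.
- exact: ccdf_dom_tail_dom mU2 h2.
Qed.
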